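(* Let $(X_i,W_i,Y_i)$, $i=1,\dots,n$, be independently distributed observations from a regression discontinuity design with cutoff $c$, as described in the context. Assume: (A1) $\mu_0(x)$ and $\mu_1(x)$ are continuous at every $x$; (A2) $p(x)$ is continuous at every $x\neq c$; at the cutoff the right and left limits of $p$ exist and are finite, and $\lim_{x\to c^+}p(x)=p(c)\neq\lim_{x\to c^-}p(x)$; (A3) the function $C(x)=\mathbb{E}[(\epsilon_i(1)-\epsilon_i(0))\epsilon_i\mid X_i=x]$ is continuous at every $x\neq c$; at the cutoff its right and left limits exist and are finite, and $\lim_{x\to c^+}C(x)=C(c)$. Then there exist a constant $\beta$ and a continuous function $f$ such that $$Y_i=\tau_c\,p(X_i)+\beta\,\mathbf{1}(X_i\ge c)+f(X_i)+\varepsilon_i,$$ where $\varepsilon_i$ is uncorrelated with $X_i$, has expectation $0$ and variance $\sigma_i^2$. In particular, in the sharp RDD (where $W_i=\mathbf{1}(X_i\ge c)$) this representation holds with $p(X_i)=\mathbf{1}(X_i\ge c)$ and $\beta=0$.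
   Context: Each unit $i$ has potential outcomes $(Y_i(0),Y_i(1))$, a received treatment $W_i\in\{0,1\}$, observed outcome $Y_i=Y_i(W_i)$, and a real-valued running variable $X_i$; $c$ is a fixed cutoff. Define $\mu_1(x)=\mathbb{E}[Y_i(1)\mid X_i=x]$, $\mu_0(x)=\mathbb{E}[Y_i(0)\mid X_i=x]$, $p(x)=\mathbb{E}[W_i\mid X_i=x]=\mathbb{P}(W_i=1\mid X_i=x)$ (the propensity score), and deviations $\epsilon_i(0)=Y_i(0)-\mu_0(X_i)$, $\epsilon_i(1)=Y_i(1)-\mu_1(X_i)$, $\epsilon_i=W_i-p(X_i)$. The average treatment effect at the cutoff is $\tau_c=\mu_1(c)-\mu_0(c)$. $X_i$ is not assumed independent of $(\epsilon_i(0),\epsilon_i(1),\epsilon_i)$. The design is called sharp if $W_i=\mathbf{1}(X_i\ge c)$ and fuzzy otherwise. *)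

From HB Require Import structures.
From mathcomp Require Import all_boot all_order all_algebra.
From mathcomp Require Import all_classical all_reals all_analysis.
Set Implicit Arguments. Unset Strict Implicit. Unset Printing Implicit Defensive.
Import Order.TTheory GRing.Theory Num.Theory.
Import numFieldNormedType.Exports.
Local Open Scope classical_set_scope.
Local Open Scope ring_scope.

(* [m] is a (version of the) conditional expectation function
   x |-> E[Z | X = x]: m is Borel measurable, Z and m(X) are integrable,
   and E[Z 1_{X in B}] = E[m(X) 1_{X in B}] for every Borel set B. *)
Definition cond_exp_fun {d} {T : measurableType d} {R : realType}
    (P : probability T R) (X Z : T -> R) (m : R -> R) : Prop :=
  measurable_fun setT m /\
  P.-integrable setT (EFin \o Z) /\
  P.-integrable setT (EFin \o (m \o X)) /\
  forall B : set R, measurable B ->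
    (\int[P]_(w in X @^-1` B) (Z w)%:E =
     \int[P]_(w in X @^-1` B) (m (X w))%:E)%E.

(* Mutual independence of the random vectors (X_i, W_i, Y_i(0), Y_i(1)),
   i < n, expressed through the product rule on measurable rectangles
   (a pi-system generating the product sigma-algebra); taking a factor
   equal to [setT] recovers the rule for any subfamily. *)
Definition indep_units {d} {T : measurableType d} {R : realType}
    (P : probability T R) (n : nat) (X W Y0 Y1 : 'I_n -> T -> R) : Prop :=
  forall A B D E : 'I_n -> set R,
    (forall i, measurable (A i) /\ measurable (B i) /\
               measurable (D i) /\ measurable (E i)) ->
    P (\bigcap_(i in [set: 'I_n])
         [set w | A i (X i w) /\ B i (W i w) /\ D i (Y0 i w) /\ E i (Y1 i w)])
    = (\prod_(i < n)
         P [set w | A i (X i w) /\ B i (W i w) /\ D i (Y0 i w) /\ E i (Y1 i w)])%E.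

Definition obsY {T} {R : realType} (W Y0 Y1 : T -> R) : T -> R :=
  fun w => if W w == 1 then Y1 w else Y0 w.

Definition good_error {d} {T : measurableType d} {R : realType}
    (P : probability T R) (Xi epsi : T -> R) : Prop :=
  epsi \in Lfun P 2%:E /\
  ('E_P[epsi] = 0)%E /\
  covariance P epsi Xi = 0%E /\
  exists sigma2 : R, ('V_P[epsi] = sigma2%:E)%E.

From HB Require Import structures.
From mathcomp Require Import all_boot all_order all_algebra.
From mathcomp Require Import all_classical all_reals all_analysis.
From mathcomp Require Import measurable_realfun lra ring.
Set Implicit Arguments. Unset Strict Implicit. Unset Printing Implicit Defensive.
Import Order.TTheory GRing.Theory Num.Theory.
Import numFieldNormedType.Exports.
Import HBSimple HBNNSimple.
Local Open Scope classical_set_scope.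
Local Open Scope ring_scope.

(* Since Y = Y(0) + W (Y(1) - Y(0)), expanding every factor around its
   conditional mean gives E[Y | X] = mu_0 + p (mu_1 - mu_0) + C, so that
   Y = E[Y | X](X) + eps with eps = Y - E[Y | X](X) centered, of finite
   variance and uncorrelated with X.  Then
   E[Y | X] = tau_c p + beta 1(. >= c) + f  with  beta = C(c) - C(c-)  and
   f = mu_0 + p (mu_1 - mu_0 - tau_c) + C - beta 1(. >= c):
   the factor mu_1 - mu_0 - tau_c vanishes at c and absorbs the jump of p,
   and subtracting beta 1(. >= c) removes the jump of C, so f is continuous.
   The measure theory lies in upgrading the defining property of a conditional
   expectation function (Z - m(X) is orthogonal to every 1_B(X)) to
   orthogonality against every h(X), via simple functions and dominated
   convergence; truncating m then shows that m(X) is square integrable. *)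

Section centered.
Context d (T : measurableType d) (R : realType) (P : probability T R).

Local Notation integrable f := (P.-integrable setT (EFin \o f)).

Definition centered (f : T -> R) := integrable f /\ (\int[P]_w (f w)%:E = 0)%E.

Lemma integrable_mul_bounded (f g : T -> R) (k : R) :
  measurable_fun setT g -> (forall w, `|g w| <= k) ->
  integrable f -> integrable (f \* g).
Proof.
move=> mg gk fi.
have gb : [bounded g x | x in setT].
  by exists k; split=> [|M /ltW kM w _]; [exact: num_real|exact: le_trans (gk w) kM].
have := integrableMl measurableT fi mg gb.
by apply: eq_integrable => // w _; rewrite /= EFinM.
Qed.

Lemma integrableD_EFin f g : integrable f -> integrable g -> integrable (f \+ g).
Proof. by move=> fi gi; apply: eq_integrable (integrableD measurableT fi gi). Qed.

Lemma integrableB_EFin f g : integrable f -> integrable g -> integrable (f \- g).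
Proof. by move=> fi gi; apply: eq_integrable (integrableB measurableT fi gi). Qed.

Lemma integrableZl_EFin k f : integrable f -> integrable (cst k \* f).
Proof. by move=> fi; apply: eq_integrable (integrableZl measurableT k fi). Qed.

Lemma centered0 : centered (cst 0).
Proof. by split; [exact: integrable0|exact: integral0]. Qed.

Lemma centeredD f g : centered f -> centered g -> centered (f \+ g).
Proof.
move=> [fi f0] [gi g0]; split; first exact: integrableD_EFin.
by rewrite (integralD_EFin measurableT fi gi) f0 g0 adde0.
Qed.

Lemma centeredZ k f : centered f -> centered (cst k \* f).
Proof.
move=> [fi f0]; split; first exact: integrableZl_EFin.
rewrite (eq_integral (fun w => k%:E * (f w)%:E))%E; last by move=> w _; rewrite EFinM.
by rewrite (integralZl measurableT fi) f0 mule0.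
Qed.

Lemma centeredB f g : centered f -> centered g -> centered (f \- g).
Proof.
move=> [fi f0] [gi g0]; split; first exact: integrableB_EFin.
by rewrite (integralB_EFin measurableT fi gi) f0 g0 sube0.
Qed.

Lemma centered_sum (I : Type) (r : seq I) (F : I -> T -> R) :
  (forall i, centered (F i)) -> centered (\sum_(i <- r) F i).
Proof. by move=> F0; apply: (big_ind centered centered0 centeredD). Qed.

Lemma centeredB_integral f g : integrable f -> integrable g ->
  centered (f \- g) <-> (\int[P]_w (f w)%:E = \int[P]_w (g w)%:E)%E.
Proof.
move=> fi gi; rewrite /centered (integralB_EFin measurableT fi gi).
have [fF gF] := (integrable_fin_num measurableT fi, integrable_fin_num measurableT gi).
split=> [[_ fg0]|fg]; first by rewrite -[LHS](subeK _ gF) fg0 add0e.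
by split; [exact: integrableB_EFin|rewrite fg subee].
Qed.

End centered.

Section orthogonal_to_functions_of.
Context d (T : measurableType d) (R : realType) (P : probability T R).
Local Notation integrable f := (P.-integrable setT (EFin \o f)).
Variables (X U : T -> R).
Hypotheses (mX : measurable_fun setT X) (iU : integrable U).
Hypothesis U_indic :
  forall B, measurable B -> (\int[P]_w (U w * \1_B (X w))%:E = 0)%E.

Lemma centered_mul_indic B : measurable B -> centered P (fun w => U w * \1_B (X w)).
Proof.
move=> mB; split; last exact: U_indic.
apply: (integrable_mul_bounded (k := 1)) => // [|w].
  exact: measurableT_comp (measurable_indic mB) mX.
by rewrite indicE; case: (_ \in _); rewrite ?normr1 ?normr0.
Qed.

Lemma centered_mul_sfun (s : {sfun R >-> R}) : centered P (fun w => U w * s (X w)).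
Proof.
have [r sE] : exists r, forall x, s x = \sum_(y <- r) y * \1_(s @^-1` [set y]) x.
  by eexists => x; rewrite fimfunE fsbig_finite; last exact: fimfunP.
have -> : (fun w => U w * s (X w)) =
    \sum_(y <- r) (cst y \* (fun w => U w * \1_(s @^-1` [set y]) (X w))).
  apply/funext => w; rewrite fct_sumE sE mulr_sumr.
  by apply: eq_bigr => y _ /=; rewrite mulrCA.
apply: centered_sum => y; apply: centeredZ; apply: centered_mul_indic.
exact: measurable_funPTI.
Qed.

Lemma centered_mul_ge0 (h : R -> R) : measurable_fun setT h -> (forall x, 0 <= h x) ->
  integrable (fun w => U w * h (X w)) -> centered P (fun w => U w * h (X w)).
Proof.
move=> mh h0 iUh; split => //.
have mEh : measurable_fun setT (EFin \o h) by exact/measurable_EFinP.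
have Eh0 x : setT x -> (0 <= (EFin \o h) x)%E by rewrite lee_fin.
pose s := nnsfun_approx measurableT mEh.
have s_le n x : s n x <= h x by rewrite -lee_fin nnsfun_approxE; exact: le_approx.
have s_cvg x : s n x @[n --> \oo] --> h x.
  by have /fine_cvgP[] := cvg_nnsfun_approx measurableT mEh Eh0 (I : setT x).
have mU : measurable_fun setT U by exact/measurable_EFinP/(measurable_int P).
have mUh n : measurable_fun setT (fun w => U w * s n (X w)).
  by apply: measurable_funM => //; exact: measurableT_comp mX.
have Us_cvg : {ae P, forall w, setT w ->
    (U w * s n (X w))%:E @[n --> \oo] --> (U w * h (X w))%:E}.
  apply: aeW => w _; apply: cvg_EFin; first exact: nearW.
  exact: cvgM (cvg_cst _) (s_cvg (X w)).
have Us_bound : {ae P, forall w, forall n, setT w ->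
    (`|(U w * s n (X w))%:E| <= `|(U w * h (X w))%:E|)%E}.
  apply: aeW => w n _ /=; rewrite lee_fin !normrM ler_wpM2l //.
  by rewrite !ger0_norm.
have [_ _] := dominated_convergence measurableT
  (fun n => (measurable_EFinP _ _).2 (mUh n)) (measurable_int P iUh) Us_cvg
  (integrable_abse iUh) Us_bound.
have -> : (fun n => \int[P]_w (U w * s n (X w))%:E)%E = cst 0%E.
  by apply/funext => n; exact: (centered_mul_sfun (s n)).2.
by move/cvg_lim => <-; rewrite ?lim_cst.
Qed.

Lemma centered_mul (h : R -> R) : measurable_fun setT h ->
  integrable (fun w => U w * h (X w)) -> centered P (fun w => U w * h (X w)).
Proof.
move=> mh iUh; have mU : measurable_fun setT U by exact/measurable_EFinP/(measurable_int P).
have part_centered (g : R -> R) : measurable_fun setT g -> (forall x, 0 <= g x) ->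
    (forall x, g x <= `|h x|) -> centered P (fun w => U w * g (X w)).
  move=> mg g0 gh; apply: centered_mul_ge0 => //.
  apply: (le_integrable measurableT) iUh => [|w _ /=].
    by apply/measurable_EFinP/measurable_funM => //; exact: measurableT_comp mX.
  by rewrite lee_fin !normrM ler_wpM2l // ger0_norm.
have -> : (fun w => U w * h (X w)) =
    (fun w => U w * h^\+ (X w)) \- (fun w => U w * h^\- (X w)).
  by apply/funext => w; rewrite /= -mulrBr -[in LHS](funrposBneg h).
apply: centeredB; apply: part_centered.
- exact: measurable_funrpos.
- exact: funrpos_ge0.
- by move=> x; rewrite /funrpos ge_max ler_norm normr_ge0.
- exact: measurable_funrneg.
- exact: funrneg_ge0.
- by move=> x; rewrite /funrneg ge_max -normrN ler_norm normr_ge0.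
Qed.

End orthogonal_to_functions_of.

Section square_integrable.
Context d (T : measurableType d) (R : realType) (P : probability T R).
Local Notation integrable f := (P.-integrable setT (EFin \o f)).
Local Notation L2 := (Lfun P 2%:E).

Lemma Lfun_measurable p (f : T -> R) : f \in Lfun P p -> measurable_fun setT f.
Proof. by rewrite inE => /andP[/[!inE]]. Qed.

Lemma Lfun2_Lfun1 (f : T -> R) : f \in L2 -> f \in Lfun P 1.
Proof. by apply: Lfun_subset12; exact: fin_num_measure. Qed.

Lemma Lfun2_integrable (f : T -> R) : f \in L2 -> integrable f.
Proof. by move=> f2; apply/Lfun1_integrable/Lfun2_Lfun1. Qed.

Lemma Lfun2_integrableM (f g : T -> R) : f \in L2 -> g \in L2 -> integrable (f \* g).
Proof. by move=> f2 g2; apply/Lfun1_integrable; exact: Lfun2_mul_Lfun1. Qed.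

Lemma Lfun2B (f g : T -> R) : f \in L2 -> g \in L2 -> f \- g \in L2.
Proof. by move=> f2 g2; apply: rpredB => //; rewrite lee1n. Qed.

Lemma Lfun2_of_sqr (f : T -> R) : measurable_fun setT f ->
  (\int[P]_w (f w ^+ 2)%:E < +oo)%E -> f \in L2.
Proof.
move=> mf f2; rewrite inE; apply/andP; split; first by rewrite inE.
rewrite inE /= /finite_norm unlock /Lnorm; apply: poweR_lty.
rewrite (eq_integral (fun w => (f w ^+ 2)%:E)) // => w _ /=.
by rewrite powR_mulrn // real_normK // num_real.
Qed.

Lemma Lfun2_sqr_le (f g : T -> R) : measurable_fun setT f ->
  (forall w, f w ^+ 2 <= g w) -> integrable g -> f \in L2.
Proof.
move=> mf fg ig; apply: Lfun2_of_sqr => //.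
apply: (@le_lt_trans _ _ (\int[P]_w (g w)%:E)%E).
  apply: ge0_le_integral => //.
  - by move=> w _; rewrite lee_fin sqr_ge0.
  - by apply/measurable_EFinP; exact: measurable_funX.
  - exact: measurable_int ig.
  - by move=> w _; rewrite lee_fin.
by have /fin_numPlt/andP[] := integrable_fin_num measurableT ig.
Qed.

End square_integrable.

Section conditional_expectation_function.
Context d (T : measurableType d) (R : realType) {P : probability T R}.
Local Notation integrable f := (P.-integrable setT (EFin \o f)).
Local Notation L2 := (Lfun P 2%:E).

Lemma integral_preimage (X f : T -> R) (B : set R) :
  (\int[P]_(w in X @^-1` B) (f w)%:E = \int[P]_w (f w * \1_B (X w))%:E)%E.
Proof.
rewrite integral_mkcond; apply: eq_integral => w _; rewrite /patch indicE.
have -> : (w \in X @^-1` B) = (X w \in B) by apply/idP/idP; rewrite !inE.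
by case: (X w \in B); rewrite ?mulr1 ?mulr0.
Qed.

Lemma integrable_mul_indic (X f : T -> R) (B : set R) : measurable_fun setT X ->
  measurable B -> integrable f -> integrable (fun w => f w * \1_B (X w)).
Proof.
move=> mX mB fi; apply: (integrable_mul_bounded (k := 1)) => // [|w].
  exact: measurableT_comp (measurable_indic mB) mX.
by rewrite indicE; case: (_ \in _); rewrite ?normr1 ?normr0.
Qed.

Lemma cond_exp_funP {X Z : T -> R} {m : R -> R} : measurable_fun setT X ->
  cond_exp_fun P X Z m <->
  [/\ measurable_fun setT m, integrable Z, integrable (m \o X) &
      forall B, measurable B ->
        (\int[P]_w ((Z w - m (X w)) * \1_B (X w))%:E = 0)%E].
Proof.
move=> mX.
suff eqB B : measurable B -> integrable Z -> integrable (m \o X) ->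
    (\int[P]_(w in X @^-1` B) (Z w)%:E = \int[P]_(w in X @^-1` B) (m (X w))%:E)%E <->
    (\int[P]_w ((Z w - m (X w)) * \1_B (X w))%:E = 0)%E.
  split=> [[mm [iZ [im ZmB]]]|[mm iZ im ZmB]].
    by split=> // B mB; apply/(eqB B mB iZ im); exact: ZmB.
  by do 3!split=> //; move=> B mB; apply/(eqB B mB iZ im); exact: ZmB.
move=> mB iZ im; rewrite !integral_preimage.
have iZB := integrable_mul_indic mX mB iZ; have imB := integrable_mul_indic mX mB im.
rewrite -(centeredB_integral iZB imB) /centered.
have -> : (fun w => Z w * \1_B (X w)) \- (fun w => m (X w) * \1_B (X w)) =
    (fun w => (Z w - m (X w)) * \1_B (X w)) by apply/funext => w; rewrite /= mulrBl.
split=> [[]|ZmB] //; split=> //.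
by apply: integrable_mul_indic => //; exact: integrableB_EFin.
Qed.

Lemma cond_exp_fun_comp (X : T -> R) (m : R -> R) : measurable_fun setT m ->
  integrable (m \o X) -> cond_exp_fun P X (m \o X) m.
Proof. by []. Qed.

Section residual.
Variables (X Z : T -> R) (m : R -> R).
Hypotheses (mX : measurable_fun setT X) (Zm : cond_exp_fun P X Z m).

Lemma cond_exp_fun_centered (h : R -> R) : measurable_fun setT h ->
  integrable (fun w => (Z w - m (X w)) * h (X w)) ->
  centered P (fun w => (Z w - m (X w)) * h (X w)).
Proof.
have [_ iZ im ZmB] := (cond_exp_funP mX).1 Zm.
by apply: centered_mul => //; exact: integrableB_EFin.
Qed.

Lemma cond_exp_fun_centered_indic B : measurable B ->
  centered P (fun w => (Z w - m (X w)) * \1_B (X w)).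
Proof.
have [_ iZ im _] := (cond_exp_funP mX).1 Zm.
move=> mB; apply: cond_exp_fun_centered; first exact: measurable_indic.
exact: integrable_mul_indic (integrableB_EFin iZ im).
Qed.

Let mtrunc (k : nat) (x : R) := m x * \1_(m @^-1` `[- k%:R, k%:R]) x.

Let measurable_m : measurable_fun setT m.
Proof. by have [] := (cond_exp_funP mX).1 Zm. Qed.

Let measurable_mtrunc k : measurable_fun setT (mtrunc k).
Proof.
apply: measurable_funM => //; apply: measurable_indic.
by rewrite -[_ @^-1` _]setTI; exact: measurable_m.
Qed.

Let mtrunc_le k x : `|mtrunc k x| <= k%:R.
Proof.
rewrite /mtrunc indicE; case: (boolP (_ \in _)) => [/set_mem/=|_].
  by rewrite in_itv/= -ler_norml mulr1.
by rewrite mulr0 normr0.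
Qed.

Let mtrunc_sqr k x : mtrunc k x ^+ 2 = m x * mtrunc k x.
Proof.
by rewrite /mtrunc indicE; case: (_ \in _); rewrite ?mulr1 ?mulr0 // expr2 mulr0.
Qed.

Let mtrunc_sqr_le k : Z \in L2 ->
  (\int[P]_w (mtrunc k (X w) ^+ 2)%:E <= \int[P]_w (Z w ^+ 2)%:E)%E.
Proof.
move=> Z2; have [_ iZ im _] := (cond_exp_funP mX).1 Zm.
have mtruncX : measurable_fun setT (mtrunc k \o X) by exact: measurableT_comp.
have itrunc2 : integrable (fun w => mtrunc k (X w) ^+ 2).
  have := integrable_mul_bounded mtruncX (fun w => mtrunc_le k (X w)) im.
  by apply: eq_integrable => // w _; rewrite /= mtrunc_sqr.
have [iU U0] := centeredZ 2 (cond_exp_fun_centered (measurable_mtrunc k)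
  (integrable_mul_bounded mtruncX (fun w => mtrunc_le k (X w)) (integrableB_EFin iZ im))).
apply: (@le_trans _ _ (\int[P]_w ((mtrunc k (X w) ^+ 2)%:E +
    (2 * ((Z w - m (X w)) * mtrunc k (X w)))%:E))%E).
  by rewrite (integralD_EFin measurableT itrunc2 iU) U0 adde0.
apply: le_integral => //; first exact: integrableD_EFin.
  exact: Lfun2_integrable_sqr.
(* Z^2 - t^2 - 2 (Z - m) t = (Z - t)^2 for t = mtrunc k, as m t = t^2. *)
move=> w _; rewrite lee_fin; have := mtrunc_sqr k (X w).
have := sqr_ge0 (Z w - mtrunc k (X w)); move: (mtrunc k _) (m _) (Z w) => t a z.
nra.
Qed.

Lemma cond_exp_fun_Lfun2 : Z \in L2 -> m \o X \in L2.
Proof.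
move=> Z2; apply: Lfun2_of_sqr; first exact: measurableT_comp.
pose g k w := (mtrunc k (X w) ^+ 2)%:E.
have mg k : measurable_fun setT (g k).
  by apply/measurable_EFinP/measurable_funX; exact: measurableT_comp.
have g0 k w : setT w -> (0 <= g k w)%E by rewrite lee_fin sqr_ge0.
have nd_g w : setT w -> {homo g^~ w : k k' / (k <= k')%N >-> (k <= k')%E}.
  move=> _ k k' kk'; rewrite /g lee_fin /mtrunc !indicE.
  case: (boolP (_ \in _)) => [/set_mem/= mk|_].
    by rewrite mem_set//= (subitvP _ mk)// subitvE !bnd_simp lerN2 ler_nat kk'.
  by rewrite mulr0 expr2 mulr0 sqr_ge0.
have g_lim w : limn (g^~ w) = (m (X w) ^+ 2)%:E.
  apply: cvg_lim => //; apply: cvg_near_cst.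
  exists (Num.truncn `|m (X w)|).+1 => // k /= mk.
  rewrite /g /mtrunc indicE mem_set ?mulr1//= in_itv/= -ler_norml.
  by apply: le_trans (ltW (truncnS_gt _)) _; rewrite ler_nat.
have -> : (\int[P]_w ((m \o X) w ^+ 2)%:E = \int[P]_w limn (g^~ w))%E.
  by apply: eq_integral => w _; rewrite g_lim.
rewrite monotone_convergence //; apply: (@le_lt_trans _ _ (\int[P]_w (Z w ^+ 2)%:E)%E).
  apply: lime_le; last by apply: nearW => k; exact: mtrunc_sqr_le.
  by apply/cvg_ex; eexists; exact: cvg_monotone_convergence.
by have /fin_numPlt/andP[] := integrable_fin_num measurableT (Lfun2_integrable_sqr Z2).
Qed.

Lemma cond_exp_fun_centered_Lfun2 (q : R -> R) B : Z \in L2 ->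
  measurable_fun setT q -> q \o X \in L2 -> measurable B ->
  centered P (fun w => (Z w - m (X w)) * (q (X w) * \1_B (X w))).
Proof.
move=> Z2 mq q2 mB; apply: (cond_exp_fun_centered (h := fun x => q x * \1_B x)).
  by apply: measurable_funM => //; exact: measurable_indic.
have U2 := Lfun2B Z2 (cond_exp_fun_Lfun2 Z2).
have := integrable_mul_indic mX mB (Lfun2_integrableM U2 q2).
by apply: eq_integrable => // w _; rewrite /= mulrA.
Qed.

Lemma cond_exp_fun_good_error : X \in L2 -> Z \in L2 ->
  good_error P X (fun w => Z w - m (X w)).
Proof.
move=> X2 Z2; have U2 : (fun w => Z w - m (X w)) \in L2.
  exact: Lfun2B Z2 (cond_exp_fun_Lfun2 Z2).
have [_ U0] : centered P (fun w => (Z w - m (X w)) * cst 1 (X w)).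
  apply: cond_exp_fun_centered; first exact: measurable_cst.
  by apply: eq_integrable (Lfun2_integrable U2) => // w _; rewrite /= mulr1.
have [_ UX0] :=
  cond_exp_fun_centered (@measurable_id _ _ setT) (Lfun2_integrableM U2 X2).
have EU0 : ('E_P[fun w => (Z w - m (X w))%R] = 0)%E.
  by rewrite unlock -U0; apply: eq_integral => w _; rewrite /= mulr1.
split=> //; split=> //; split.
  rewrite covarianceE ?Lfun2_mul_Lfun1 ?Lfun2_Lfun1 //.
  by rewrite EU0 mul0e sube0 unlock; exact: UX0.
by exists (fine 'V_P[fun w => Z w - m (X w)]); rewrite fineK // variance_fin_num.
Qed.

End residual.

End conditional_expectation_function.

Section step_function.
Variables (R : realType) (c : R).

Lemma measurable_ge_indic : measurable_fun setT (fun x : R => (c <= x)%R%:R : R).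
Proof.
apply: eq_measurable_fun (measurable_indic (measurable_itv `[c, +oo[)) => x _.
by rewrite indicE mem_setE in_itv/= andbT.
Qed.

Lemma continuous_at_ge_indic x :
  x != c -> {for x, continuous (fun y : R => (c <= y)%R%:R : R)}.
Proof.
move=> xc; apply: cvg_near_cst; have [xlt|xgt] := ltP x c.
  by near=> y; rewrite !lt_geF//; near: y; exact: lt_nbhsl.
have cx : c < x by rewrite lt_neqAle eq_sym xc.
by near=> y; rewrite !ltW//; near: y; exact: lt_nbhsr.
Unshelve. all: by end_near. Qed.

Lemma ge_indic_cvg_left : (c <= x)%R%:R @[x --> c^'-] --> (0 : R).
Proof.
by apply: cvg_near_cst; near=> x; rewrite lt_geF//; near: x; exact: nbhs_left_lt.
Unshelve. all: by end_near. Qed.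

Lemma ge_indic_cvg_right : (c <= x)%R%:R @[x --> c^'+] --> (1 : R).
Proof.
by apply: cvg_near_cst; near=> x; rewrite ltW//; near: x; exact: nbhs_right_gt.
Unshelve. all: by end_near. Qed.

Lemma continuousM_jump (p g : R -> R) (pl pr : R) :
  (forall x, x != c -> {for x, continuous p}) ->
  p x @[x --> c^'-] --> pl -> p x @[x --> c^'+] --> pr ->
  continuous g -> g c = 0 -> continuous (fun x => p x * g x).
Proof.
move=> pc pL pR gc g0 x.
have [->|xc] := eqVneq x c; last exact: (continuousM (pc _ xc) (gc x)).
apply/left_right_continuousP; rewrite g0 mulr0; split.
- by rewrite -(mulr0 pl) -g0; apply: cvgM pL _; exact: cvg_within_filter (gc c).
- by rewrite -(mulr0 pr) -g0; apply: cvgM pR _; exact: cvg_within_filter (gc c).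
Qed.

Lemma continuousB_jump (C : R -> R) (Cl : R) :
  (forall x, x != c -> {for x, continuous C}) ->
  C x @[x --> c^'-] --> Cl -> C x @[x --> c^'+] --> C c ->
  continuous (fun x => C x - (C c - Cl) * (c <= x)%R%:R).
Proof.
move=> Cc CL CR x; have [->|xc] := eqVneq x c; last first.
  apply: cvgB; first exact: Cc.
  by apply: cvgM; [exact: cvg_cst|exact: continuous_at_ge_indic].
apply/left_right_continuousP; split.
- have -> : C c - (C c - Cl) * (c <= c)%R%:R = Cl - (C c - Cl) * 0.
    by rewrite lexx /=; ring.
  exact: cvgB CL (cvgM (cvg_cst _) ge_indic_cvg_left).
- have -> : C c - (C c - Cl) * (c <= c)%R%:R = C c - (C c - Cl) * 1 by rewrite lexx.
  exact: cvgB CR (cvgM (cvg_cst _) ge_indic_cvg_right).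
Qed.

Lemma continuous_jump_remainder (mu0 mu1 p C : R -> R) (pl pr Cl : R) :
  continuous mu0 -> continuous mu1 ->
  (forall x, x != c -> {for x, continuous p}) ->
  p x @[x --> c^'-] --> pl -> p x @[x --> c^'+] --> pr ->
  (forall x, x != c -> {for x, continuous C}) ->
  C x @[x --> c^'-] --> Cl -> C x @[x --> c^'+] --> C c ->
  continuous (fun x => mu0 x + p x * (mu1 x - mu0 x - (mu1 c - mu0 c)) +
                       (C x - (C c - Cl) * (c <= x)%R%:R)).
Proof.
move=> cmu0 cmu1 pc pL pR Cc CL CR x; apply: cvgD; [apply: cvgD|].
- exact: cmu0.
- apply: continuousM_jump pc pL pR _ _ x; last by rewrite subrr.
  by move=> y; apply: cvgB; [apply: cvgB; [exact: cmu1|exact: cmu0]|exact: cvg_cst].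
- exact: continuousB_jump Cc CL CR x.
Qed.

End step_function.

Lemma obsYE (T : Type) (R : realType) (W Y0 Y1 : T -> R) w :
  W w = 0 \/ W w = 1 -> obsY W Y0 Y1 w = Y0 w + W w * (Y1 w - Y0 w).
Proof.
by rewrite /obsY => -[]->; rewrite ?eqxx ?(eq_sym 0) ?oner_eq0 /=; ring.
Qed.

Section potential_outcomes.
Context d (T : measurableType d) (R : realType) (P : probability T R).
Local Notation L2 := (Lfun P 2%:E).
Variables (W Y0 Y1 : T -> R).
Hypotheses (mW : measurable_fun setT W) (W01 : forall w, W w = 0 \/ W w = 1).

Lemma treatment_Lfun2 : W \in L2.
Proof.
apply: (Lfun2_sqr_le (g := cst 1)) => // [w|].
  by case: (W01 w) => ->; rewrite ?expr0n ?expr1n.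
exact: finite_measure_integrable_cst.
Qed.

Lemma obsY_Lfun2 : Y0 \in L2 -> Y1 \in L2 -> obsY W Y0 Y1 \in L2.
Proof.
move=> Y02 Y12; apply: (Lfun2_sqr_le (g := fun w => Y0 w ^+ 2 + Y1 w ^+ 2)).
- have -> : obsY W Y0 Y1 = Y0 \+ W \* (Y1 \- Y0) by apply/funext => w; exact: obsYE.
  have [mY0 mY1] := (Lfun_measurable Y02, Lfun_measurable Y12).
  by apply: measurable_funD => //; apply: measurable_funM => //; exact: measurable_funB.
- by move=> w; rewrite /obsY; case: ifP => _; rewrite ?lerDl ?lerDr sqr_ge0.
- by apply: integrableD_EFin; exact: Lfun2_integrable_sqr.
Qed.

Lemma cond_exp_fun_obsY (X : T -> R) (mu0 mu1 p C : R -> R) :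
  X \in L2 -> Y0 \in L2 -> Y1 \in L2 ->
  cond_exp_fun P X Y0 mu0 -> cond_exp_fun P X Y1 mu1 -> cond_exp_fun P X W p ->
  cond_exp_fun P X
    (fun w => ((Y1 w - mu1 (X w)) - (Y0 w - mu0 (X w))) * (W w - p (X w))) C ->
  cond_exp_fun P X (obsY W Y0 Y1) (fun x => mu0 x + p x * (mu1 x - mu0 x) + C x).
Proof.
move=> X2 Y02 Y12 c0 c1 cp cC; have mX := Lfun_measurable X2.
have mu0X2 := cond_exp_fun_Lfun2 mX c0 Y02.
have mu1X2 := cond_exp_fun_Lfun2 mX c1 Y12.
have pX2 := cond_exp_fun_Lfun2 mX cp treatment_Lfun2.
have [mmu0 _ _ _] := (cond_exp_funP mX).1 c0.
have [mmu1 _ _ _] := (cond_exp_funP mX).1 c1.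
have [mp _ _ _] := (cond_exp_funP mX).1 cp.
have [mC _ iC _] := (cond_exp_funP mX).1 cC.
have mD : measurable_fun setT (fun x => mu1 x - mu0 x) by exact: measurable_funB.
apply/(cond_exp_funP mX); split.
- by apply: measurable_funD => //; apply: measurable_funD => //; exact: measurable_funM.
- exact/Lfun2_integrable/obsY_Lfun2.
- apply: integrableD_EFin iC; apply: integrableD_EFin (Lfun2_integrable mu0X2) _.
  exact: Lfun2_integrableM pX2 (Lfun2B mu1X2 mu0X2).
- move=> B mB.
  have [_ <-] := centeredD (centeredD (centeredD
      (cond_exp_fun_centered_indic mX c0 mB) (cond_exp_fun_centered_indic mX cC mB))
      (centeredB (cond_exp_fun_centered_Lfun2 mX c1 Y12 mp pX2 mB)
                 (cond_exp_fun_centered_Lfun2 mX c0 Y02 mp pX2 mB)))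
    (cond_exp_fun_centered_Lfun2 mX cp treatment_Lfun2 mD (Lfun2B mu1X2 mu0X2) mB).
  by apply: eq_integral => w _; congr EFin; rewrite /= obsYE //; ring.
Qed.

Lemma obsY_good_error (X : T -> R) (mu0 mu1 p C : R -> R) :
  X \in L2 -> Y0 \in L2 -> Y1 \in L2 ->
  cond_exp_fun P X Y0 mu0 -> cond_exp_fun P X Y1 mu1 -> cond_exp_fun P X W p ->
  cond_exp_fun P X
    (fun w => ((Y1 w - mu1 (X w)) - (Y0 w - mu0 (X w))) * (W w - p (X w))) C ->
  good_error P X (fun w => obsY W Y0 Y1 w -
    (mu0 (X w) + p (X w) * (mu1 (X w) - mu0 (X w)) + C (X w))).
Proof.
move=> X2 Y02 Y12 c0 c1 cp cC.
have := cond_exp_fun_obsY X2 Y02 Y12 c0 c1 cp cC.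
by move/(cond_exp_fun_good_error (Lfun_measurable X2)); apply => //; exact: obsY_Lfun2.
Qed.

Lemma obsY_good_error_sharp (X : T -> R) (c : R) (mu0 mu1 : R -> R) :
  (forall w, W w = (c <= X w)%R%:R) ->
  X \in L2 -> Y0 \in L2 -> Y1 \in L2 ->
  cond_exp_fun P X Y0 mu0 -> cond_exp_fun P X Y1 mu1 ->
  good_error P X (fun w => obsY W Y0 Y1 w -
    (mu0 (X w) + (c <= X w)%R%:R * (mu1 (X w) - mu0 (X w)))).
Proof.
move=> WX X2 Y02 Y12 c0 c1.
have WE : W = (fun x => (c <= x)%R%:R) \o X by apply/funext => w; exact: WX.
have := obsY_good_error (p := fun x => (c <= x)%R%:R) (C := cst 0) X2 Y02 Y12 c0 c1.
have -> : (fun w => ((Y1 w - mu1 (X w)) - (Y0 w - mu0 (X w))) * (W w - (c <= X w)%R%:R)) =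
    cst 0 \o X by apply/funext => w; rewrite /= WX subrr mulr0.
rewrite (_ : (fun w => _ - _) = (fun w => obsY W Y0 Y1 w -
    (mu0 (X w) + (c <= X w)%R%:R * (mu1 (X w) - mu0 (X w))))); last first.
  by apply/funext => w; rewrite addr0.
apply.
- rewrite {1}WE; apply: cond_exp_fun_comp; first exact: measurable_ge_indic.
  by rewrite -WE; exact/Lfun2_integrable/treatment_Lfun2.
- by apply: cond_exp_fun_comp; [exact: measurable_cst|exact: finite_measure_integrable_cst].
Qed.

End potential_outcomes.

Theorem theorem1 (R : realType) (d : measure_display) (T : measurableType d)
  (P : probability T R) (n : nat)
  (X W Y0 Y1 : 'I_n -> T -> R) (c : R)
  (mu0 mu1 p C : R -> R) :
  (* observations: random variables, square integrable, independent units *)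
  (forall i, X i \in Lfun P 2%:E) ->
  (forall i, Y0 i \in Lfun P 2%:E) ->
  (forall i, Y1 i \in Lfun P 2%:E) ->
  (forall i, measurable_fun setT (W i)) ->
  (forall i w, W i w = 0 \/ W i w = 1) ->
  indep_units P X W Y0 Y1 ->
  (* definitions of mu_0, mu_1, p and C as conditional expectations *)
  (forall i, cond_exp_fun P (X i) (Y0 i) mu0) ->
  (forall i, cond_exp_fun P (X i) (Y1 i) mu1) ->
  (forall i, cond_exp_fun P (X i) (W i) p) ->
  (forall i, cond_exp_fun P (X i)
     (fun w => ((Y1 i w - mu1 (X i w)) - (Y0 i w - mu0 (X i w)))
               * (W i w - p (X i w))) C) ->
  (* (A1) *)
  continuous mu0 -> continuous mu1 ->
  (* (A2) *)
  (forall x, x != c -> {for x, continuous p}) ->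
  (exists pl pr : R, p x @[x --> c^'+] --> pr /\ p x @[x --> c^'-] --> pl /\
                     pr = p c /\ pr != pl) ->
  (* (A3) *)
  (forall x, x != c -> {for x, continuous C}) ->
  (exists Cl Cr : R, C x @[x --> c^'+] --> Cr /\ C x @[x --> c^'-] --> Cl /\
                     Cr = C c) ->
  let tau_c := mu1 c - mu0 c in
  (exists (beta : R) (f : R -> R), continuous f /\
     exists eps : 'I_n -> T -> R, forall i,
       (forall w, obsY (W i) (Y0 i) (Y1 i) w =
          tau_c * p (X i w) + beta * (c <= X i w)%R%:R + f (X i w) + eps i w) /\
       good_error P (X i) (eps i)) /\
  ((forall i w, W i w = (c <= X i w)%R%:R) ->
   exists f : R -> R, continuous f /\
     exists eps : 'I_n -> T -> R, forall i,
       (forall w, obsY (W i) (Y0 i) (Y1 i) w =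
          tau_c * (c <= X i w)%R%:R + 0 * (c <= X i w)%R%:R + f (X i w) + eps i w) /\
       good_error P (X i) (eps i)).
Proof.
(* The representation is unit by unit. *)
move=> X2 Y02 Y12 mW W01 _ c0 c1 cp cC cmu0 cmu1 pc [pl [pr [pR [pL _]]]]
  Cc [Cl [Cr [CR [CL eCr]]]] tau_c.
rewrite {Cr}eCr in CR; split.
- exists (C c - Cl), (fun x => mu0 x + p x * (mu1 x - mu0 x - tau_c) +
                               (C x - (C c - Cl) * (c <= x)%R%:R)).
  split; first exact: continuous_jump_remainder pc pL pR Cc CL CR.
  exists (fun i w => obsY (W i) (Y0 i) (Y1 i) w -
    (mu0 (X i w) + p (X i w) * (mu1 (X i w) - mu0 (X i w)) + C (X i w))) => i.
  by split=> [w|]; [ring|exact: obsY_good_error].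
- move=> Wc; exists (fun x => mu0 x + (c <= x)%R%:R * (mu1 x - mu0 x - tau_c) +
                               (0 - (0 - 0) * (c <= x)%R%:R)); split.
    exact: (continuous_jump_remainder (C := cst 0) cmu0 cmu1
      (@continuous_at_ge_indic R c) (ge_indic_cvg_left c) (ge_indic_cvg_right c)
      (fun _ _ => cvg_cst _) (cvg_cst _) (cvg_cst _)).
  exists (fun i w => obsY (W i) (Y0 i) (Y1 i) w -
    (mu0 (X i w) + (c <= X i w)%R%:R * (mu1 (X i w) - mu0 (X i w)))) => i.
  by split=> [w|]; [ring|exact: obsY_good_error_sharp].
Qed.
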